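(* Let $G$ be a group which is an internal semidirect product $G = HK$, where $H$ is a normal subgroup of $G$, $K$ is a subgroup of $G$ with $H\cap K=1$. Let $\hat{\mathcal{M}}_K$ be the set of all formal matrices $\begin{pmatrix}\alpha & 0\\ \gamma & \delta\end{pmatrix}$ with $\alpha\in \mathrm{Map}(H,H)$, $\gamma\in \mathrm{Hom}(H,K)$, $\delta\in \mathrm{Aut}(K)$ satisfying: (C1) $\alpha(hh') = \alpha(h)\,\alpha(h')^{\gamma(h)}$ for all $h,h'\in H$; (C2) $\gamma(h^{k}) = \gamma(h)^{\delta(k)}$ for all $h\in H$, $k\in K$; (C3) $\alpha(h^{k}) = \alpha(h)^{\delta(k)}$ for all $h\in H$, $k\in K$; (C4) for every $h'k'\in G$ ($h'\in H$, $k'\in K$) there is a unique $hk\in G$ ($h\in H,k\in K$) with $\alpha(h)=h'$ and $\gamma(h)\delta(k)=k'$. Equip $\hat{\mathcal{M}}_K$ with the multiplication $\begin{pmatrix}\alpha & 0\\ \gamma & \delta\end{pmatrix}\begin{pmatrix}\alpha' & 0\\ \gamma' & \delta'\end{pmatrix}=\begin{pmatrix}\alpha\alpha' & 0\\ \gamma\alpha'+\delta\gamma' & \delta\delta'\end{pmatrix}$, where $\alpha\alpha'$, $\delta\delta'$ are compositions and $(\gamma\alpha'+\delta\gamma')(h)=\gamma(\alpha'(h))\,\delta(\gamma'(h))$. Then $\hat{\mathcal{M}}_K$ is a group and the group $\mathrm{Aut}_K(G)$ is isomorphic to $\hat{\mathcal{M}}_K$ (via $\theta\mapsto \begin{pmatrix}\alpha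 & 0\\ \gamma & \delta\end{pmatrix}$ where $\theta(h)=\alpha(h)\gamma(h)$ for $h\in H$ and $\delta=\theta|_K$).
   Context: For a group $G$ and $x,y\in G$, $x^{y}$ denotes the conjugate $yxy^{-1}$. For a subgroup $K$ of $G$, $\mathrm{Aut}_K(G)=\{\theta\in\mathrm{Aut}(G)\mid \theta(K)=K\}$. $\mathrm{Map}(H,H)$ denotes the set of all maps $H\to H$. *)

Set Implicit Arguments.
Unset Strict Implicit.

Record Group := {
  gcar :> Type;
  gmul : gcar -> gcar -> gcar;
  gone : gcar;
  ginv : gcar -> gcar;
  gmulA : forall x y z, gmul x (gmul y z) = gmul (gmul x y) z;
  gmul1l : forall x, gmul gone x = x;
  gmul1r : forall x, gmul x gone = x;
  gmulVl : forall x, gmul (ginv x) x = gone;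
  gmulVr : forall x, gmul x (ginv x) = gone }.

Arguments gmul {g} _ _.
Arguments gone {g}.
Arguments ginv {g} _.

(* x^y := y x y^{-1} *)
Definition gconj (G : Group) (x y : G) : G := gmul y (gmul x (ginv y)).

Record subgroup (G : Group) := {
  smem : G -> Prop;
  smem1 : smem gone;
  smemM : forall x y, smem x -> smem y -> smem (gmul x y);
  smemV : forall x, smem x -> smem (ginv x) }.

Definition elt (G : Group) (S : subgroup G) := {x : G | smem S x}.

Definition smul (G : Group) (S : subgroup G) (a b : elt S) : elt S :=
  exist _ (gmul (proj1_sig a) (proj1_sig b))
        (smemM (proj2_sig a) (proj2_sig b)).

Definition normal (G : Group) (H : subgroup G) : Prop :=
  forall h g : G, smem H h -> smem H (gconj h g).

Definition semidirect (G : Group) (H K : subgroup G) : Prop :=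
  normal H /\
  (forall g : G, exists h k : G, smem H h /\ smem K k /\ g = gmul h k) /\
  (forall x : G, smem H x -> smem K x -> x = gone).

Definition bijective {A B : Type} (f : A -> B) : Prop :=
  (forall x y, f x = f y -> x = y) /\ (forall y, exists x, f x = y).

Definition AutK (G : Group) (K : subgroup G) (theta : G -> G) : Prop :=
  (forall x y : G, theta (gmul x y) = gmul (theta x) (theta y)) /\
  bijective theta /\
  (forall x, smem K x -> smem K (theta x)) /\
  (forall y, smem K y -> exists x, smem K x /\ theta x = y).

Record mat (G : Group) (H K : subgroup G) := Mat {
  ma : elt H -> elt H;
  mg : elt H -> elt K;
  md : elt K -> elt K }.

Arguments Mat {G H K} _ _ _.

Definition inMK (G : Group) (H K : subgroup G) (m : mat H K) : Prop :=
  (forall a b : elt H, mg m (smul a b) = smul (mg m a) (mg m b)) /\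
  (forall a b : elt K, md m (smul a b) = smul (md m a) (md m b)) /\
  bijective (md m) /\
  (forall h h' : elt H,
     proj1_sig (ma m (smul h h')) =
     gmul (proj1_sig (ma m h))
          (gconj (proj1_sig (ma m h')) (proj1_sig (mg m h)))) /\
  (forall (h : elt H) (k : elt K) (hk : elt H),
     proj1_sig hk = gconj (proj1_sig h) (proj1_sig k) ->
     proj1_sig (mg m hk) = gconj (proj1_sig (mg m h)) (proj1_sig (md m k))) /\
  (forall (h : elt H) (k : elt K) (hk : elt H),
     proj1_sig hk = gconj (proj1_sig h) (proj1_sig k) ->
     proj1_sig (ma m hk) = gconj (proj1_sig (ma m h)) (proj1_sig (md m k))) /\
  (forall (h' : elt H) (k' : elt K),
     exists! p : elt H * elt K,
       ma m (fst p) = h' /\ smul (mg m (fst p)) (md m (snd p)) = k').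

Definition mmul (G : Group) (H K : subgroup G) (m m' : mat H K) : mat H K :=
  Mat (fun h => ma m (ma m' h))
      (fun h => smul (mg m (ma m' h)) (md m (mg m' h)))
      (fun k => md m (md m' k)).

(* Every g in G factors uniquely as g = h k with h in H, k in K.  An automorphism
   theta stabilising K is therefore determined by the matrix (alpha, gamma, delta)
   read off from theta h = alpha(h) gamma(h) and delta = theta|_K, through
   theta (h k) = alpha(h) gamma(h) delta(k).  Conversely, for a matrix of M_K this
   formula defines a map of G: it is multiplicative because
   (h k)(h' k') = (h h'^k)(k k') and (C1)-(C3) describe exactly how alpha and gamma
   treat such products, and (C4) says precisely that it is bijective.  The two
   constructions are mutually inverse and turn composition into the matrix product,
   so M_K inherits the group structure of Aut_K(G). *)

From Stdlib Require Import ClassicalEpsilon FunctionalExtensionality ProofIrrelevance.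

Local Notation "x ** y" := (gmul x y) (at level 40, left associativity).
Local Notation val := (@proj1_sig _ _).

Section GroupFacts.
Context {G : Group}.
Implicit Types x y z : G.

Lemma mulKVg x y : x ** (ginv x ** y) = y.
Proof. rewrite gmulA, gmulVr, gmul1l. reflexivity. Qed.

Lemma mulKg x y : ginv x ** (x ** y) = y.
Proof. rewrite gmulA, gmulVl, gmul1l. reflexivity. Qed.

Lemma mulgI x y z : x ** y = x ** z -> y = z.
Proof. intro E. rewrite <- (mulKg x y), <- (mulKg x z), E. reflexivity. Qed.

Lemma mulIg x y z : y ** x = z ** x -> y = z.
Proof.
  intro E. rewrite <- (gmul1r y), <- (gmul1r z), <- (gmulVr x), !gmulA, E.
  reflexivity.
Qed.

Lemma invg_unique x y : x ** y = gone -> y = ginv x.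
Proof. intro E. apply (mulgI x). rewrite E, gmulVr. reflexivity. Qed.

Lemma invMg x y : ginv (x ** y) = ginv y ** ginv x.
Proof. symmetry. apply invg_unique. rewrite <- gmulA, mulKVg, gmulVr. reflexivity. Qed.

Lemma invgK x : ginv (ginv x) = x.
Proof. symmetry. apply invg_unique, gmulVl. Qed.

Lemma invg1 : ginv (gone : G) = gone.
Proof. symmetry. apply invg_unique, gmul1l. Qed.

Lemma idemg_eq1 x : x ** x = x -> x = gone.
Proof. intro E. apply (mulgI x). rewrite gmul1r. exact E. Qed.

End GroupFacts.

Ltac group_simpl :=
  unfold gconj;
  repeat (rewrite <- gmulA || rewrite mulKVg || rewrite mulKg || rewrite gmulVl
          || rewrite gmulVr || rewrite gmul1l || rewrite gmul1r || rewrite invMg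
          || rewrite invgK || rewrite invg1).

Lemma morph1 {G G' : Group} {f : G -> G'} :
  (forall x y, f (x ** y) = f x ** f y) -> f gone = gone.
Proof. intro fM. apply idemg_eq1. rewrite <- fM, gmul1l. reflexivity. Qed.

Lemma morphV {G G' : Group} {f : G -> G'} :
  (forall x y, f (x ** y) = f x ** f y) -> forall x, f (ginv x) = ginv (f x).
Proof. intros fM x. apply invg_unique. rewrite <- fM, gmulVr. exact (morph1 fM). Qed.

Lemma val_inj {G : Group} {S : subgroup G} (a b : elt S) : val a = val b -> a = b.
Proof.
  destruct a as [x px], b as [y py]; simpl; intros <-.
  f_equal. apply proof_irrelevance.
Qed.

Lemma val_smul {G : Group} {S : subgroup G} (a b : elt S) :
  val (smul a b) = val a ** val b.
Proof. reflexivity. Qed.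

Definition elt1 {G : Group} (S : subgroup G) : elt S := exist _ gone (smem1 S).

Lemma smul11 {G : Group} (S : subgroup G) : smul (elt1 S) (elt1 S) = elt1 S.
Proof. apply val_inj, gmul1l. Qed.

Lemma morph_elt1 {G : Group} {S T : subgroup G} {f : elt S -> elt T} :
  (forall a b, f (smul a b) = smul (f a) (f b)) -> f (elt1 S) = elt1 T.
Proof.
  intro fM. apply val_inj, idemg_eq1.
  rewrite <- val_smul, <- fM, smul11. reflexivity.
Qed.

Section AutKGroup.
Context {G : Group} {K : subgroup G}.

Lemma AutK_id : AutK K (fun x => x).
Proof.
  split; [|split; [split|split]]; auto.
  - intro y. exists y. reflexivity.
  - intros y Hy. exists y. auto.
Qed.

Lemma AutK_comp {th th' : G -> G} : AutK K th -> AutK K th' -> AutK K (fun x => th (th' x)).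
Proof.
  intros (thM & [thI thS] & thK & thKs) (th'M & [th'I th'S] & th'K & th'Ks).
  split; [|split; [split|split]].
  - intros x y. rewrite th'M, thM. reflexivity.
  - intros x y E. apply th'I, thI, E.
  - intro y. destruct (thS y) as [z <-]. destruct (th'S z) as [x <-]. exists x. reflexivity.
  - intros x Hx. apply thK, th'K, Hx.
  - intros y Hy. destruct (thKs y Hy) as [z [Hz <-]]. destruct (th'Ks z Hz) as [x [Hx <-]].
    exists x. split; [exact Hx | reflexivity].
Qed.

Lemma AutK_inv {th : G -> G} : AutK K th ->
  exists thi, AutK K thi /\ (forall x, th (thi x) = x) /\ (forall x, thi (th x) = x).
Proof.
  intros (thM & [thI thS] & thK & thKs).
  pose (thi y := proj1_sig (constructive_indefinite_description _ (thS y))).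
  assert (R : forall y, th (thi y) = y).
  { intro y. unfold thi. destruct constructive_indefinite_description. assumption. }
  assert (L : forall x, thi (th x) = x) by (intro x; apply thI, R).
  exists thi. split; [|split; assumption].
  split; [|split; [split|split]].
  - intros x y. apply thI. rewrite thM, !R. reflexivity.
  - intros x y E. rewrite <- (R x), <- (R y), E. reflexivity.
  - intro y. exists (th y). apply L.
  - intros y Hy. destruct (thKs y Hy) as [x [Hx <-]]. rewrite L. exact Hx.
  - intros y Hy. exists (th y). split; [apply thK, Hy | apply L].
Qed.

End AutKGroup.

Section Decomposition.
Context {G : Group} {H K : subgroup G}.
Hypothesis hSD : semidirect H K.

Lemma semidirect_uniq {h1 k1 h2 k2 : G} :
  smem H h1 -> smem K k1 -> smem H h2 -> smem K k2 ->
  h1 ** k1 = h2 ** k2 -> h1 = h2 /\ k1 = k2.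
Proof.
  destruct hSD as [_ [_ HK1]]. intros Hh1 Hk1 Hh2 Hk2 E.
  assert (E' : ginv h2 ** h1 = k2 ** ginv k1).
  { apply (mulgI h2), (mulIg k1). group_simpl. exact E. }
  assert (I : ginv h2 ** h1 = gone).
  { apply HK1; [|rewrite E']; auto using smemM, smemV. }
  split.
  - rewrite <- (mulKVg h2 h1), I, gmul1r. reflexivity.
  - rewrite I in E'. apply (mulIg (ginv k1)). rewrite gmulVr. exact E'.
Qed.

Lemma mul_elt_inj (a a' : elt H) (b b' : elt K) :
  val a ** val b = val a' ** val b' -> a = a' /\ b = b'.
Proof.
  intro E. destruct (semidirect_uniq (proj2_sig a) (proj2_sig b) (proj2_sig a') (proj2_sig b') E).
  split; apply val_inj; assumption.
Qed.

Lemma decomp_exists g : exists p : elt H * elt K, g = val (fst p) ** val (snd p).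
Proof.
  destruct hSD as [_ [D _]]. destruct (D g) as (h & k & Hh & Hk & E).
  exists (exist _ h Hh, exist _ k Hk). exact E.
Qed.

Definition decomp g : elt H * elt K :=
  proj1_sig (constructive_indefinite_description _ (decomp_exists g)).
Definition hpart g := fst (decomp g).
Definition kpart g := snd (decomp g).

Lemma decompE g : g = val (hpart g) ** val (kpart g).
Proof. unfold hpart, kpart, decomp. destruct constructive_indefinite_description. assumption. Qed.

Lemma decomp_mul (a : elt H) (b : elt K) :
  hpart (val a ** val b) = a /\ kpart (val a ** val b) = b.
Proof. apply mul_elt_inj. rewrite <- decompE. reflexivity. Qed.

Lemma decomp_val {g x y : G} : smem H x -> smem K y -> g = x ** y ->
  val (hpart g) = x /\ val (kpart g) = y.
Proof.
  intros Hx Hy E. apply semidirect_uniq; try apply proj2_sig; try assumption.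
  rewrite <- decompE. exact E.
Qed.

Lemma kpart_K x : smem K x -> val (kpart x) = x.
Proof. intro Hx. refine (proj2 (decomp_val (smem1 H) Hx _)). symmetry. apply gmul1l. Qed.

End Decomposition.

Lemma mat_eq {G : Group} {H K : subgroup G} (m m' : mat H K) :
  (forall h, ma m h = ma m' h) -> (forall h, mg m h = mg m' h) ->
  (forall k, md m k = md m' k) -> m = m'.
Proof.
  destruct m, m'; simpl. intros Ea Eg Ed.
  f_equal; apply functional_extensionality; assumption.
Qed.

Section Matrices.
Context {G : Group} {H K : subgroup G}.
Hypothesis hSD : semidirect H K.

Local Notation hpart := (hpart hSD).
Local Notation kpart := (kpart hSD).

Definition autK_mat (th : G -> G) : mat H K :=
  Mat (fun h => hpart (th (val h))) (fun h => kpart (th (val h)))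
      (fun k => kpart (th (val k))).

Definition mat_aut (m : mat H K) (g : G) : G :=
  val (ma m (hpart g)) ** val (smul (mg m (hpart g)) (md m (kpart g))).

Lemma mat_autE m (a : elt H) (b : elt K) :
  mat_aut m (val a ** val b) = val (ma m a) ** val (smul (mg m a) (md m b)).
Proof. unfold mat_aut. destruct (decomp_mul hSD a b) as [-> ->]. reflexivity. Qed.

Lemma mat_aut_decomp_iff m (a h' : elt H) (b k' : elt K) :
  ma m a = h' /\ smul (mg m a) (md m b) = k' <->
  mat_aut m (val a ** val b) = val h' ** val k'.
Proof.
  rewrite mat_autE. split.
  - intros [<- <-]. reflexivity.
  - apply (mul_elt_inj hSD).
Qed.

Lemma mat_aut_bijective m :
  (forall (h' : elt H) (k' : elt K), exists! p : elt H * elt K,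
     ma m (fst p) = h' /\ smul (mg m (fst p)) (md m (snd p)) = k') <->
  bijective (mat_aut m).
Proof.
  split.
  - intro C4. split.
    + intros x y E.
      destruct (C4 (ma m (hpart x)) (smul (mg m (hpart x)) (md m (kpart x)))) as [p [_ U]].
      assert (Ux : p = (hpart x, kpart x)) by (apply U; split; reflexivity).
      assert (Uy : p = (hpart y, kpart y)).
      { apply U, mat_aut_decomp_iff. cbn [fst snd]. rewrite <- decompE. symmetry. exact E. }
      rewrite Ux in Uy. injection Uy as Ea Eb.
      rewrite (decompE hSD x), (decompE hSD y), Ea, Eb. reflexivity.
    + intro y. destruct (C4 (hpart y) (kpart y)) as [[a b] [Hab _]].
      apply mat_aut_decomp_iff in Hab. cbn [fst snd] in Hab.
      exists (val a ** val b). rewrite Hab. symmetry. apply decompE.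
  - intros [Inj Surj] h' k'. destruct (Surj (val h' ** val k')) as [g Eg].
    exists (hpart g, kpart g). split.
    + apply mat_aut_decomp_iff. cbn [fst snd]. rewrite <- decompE. exact Eg.
    + intros [a b] Hab. apply mat_aut_decomp_iff in Hab. cbn [fst snd] in Hab.
      rewrite <- Eg in Hab. apply Inj in Hab. rewrite <- Hab.
      destruct (decomp_mul hSD a b) as [-> ->]. reflexivity.
Qed.

Section AutKToMat.
Context {th : G -> G}.
Hypothesis thA : AutK K th.

Lemma autK_kpart (k : elt K) : val (kpart (th (val k))) = th (val k).
Proof. apply (kpart_K hSD), (proj1 (proj2 (proj2 thA))), proj2_sig. Qed.

Lemma mat_aut_autK_mat x : mat_aut (autK_mat th) x = th x.
Proof.
  unfold mat_aut, autK_mat. cbn [ma mg md]. rewrite val_smul, autK_kpart, gmulA.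
  rewrite <- (decompE hSD (th _)), <- (proj1 thA), <- (decompE hSD x). reflexivity.
Qed.

Lemma autK_decompM (a b : elt H) :
  val (hpart (th (val a ** val b))) =
    val (hpart (th (val a))) ** gconj (val (hpart (th (val b)))) (val (kpart (th (val a)))) /\
  val (kpart (th (val a ** val b))) = val (kpart (th (val a))) ** val (kpart (th (val b))).
Proof.
  apply (decomp_val hSD).
  - apply smemM; [apply proj2_sig | apply (proj1 hSD), proj2_sig].
  - apply smemM; apply proj2_sig.
  - rewrite (proj1 thA), (decompE hSD (th (val a))) at 1. rewrite (decompE hSD (th (val b))) at 1.
    group_simpl. reflexivity.
Qed.

Lemma autK_decompJ (h : elt H) (k : elt K) :
  val (hpart (th (gconj (val h) (val k)))) = gconj (val (hpart (th (val h)))) (th (val k)) /\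
  val (kpart (th (gconj (val h) (val k)))) = gconj (val (kpart (th (val h)))) (th (val k)).
Proof.
  destruct thA as (thM & _ & thK & _).
  assert (Hk : smem K (th (val k))) by apply thK, proj2_sig.
  apply (decomp_val hSD).
  - apply (proj1 hSD), proj2_sig.
  - unfold gconj. apply smemM; [|apply smemM; [apply proj2_sig|]]; auto using smemV.
  - unfold gconj at 1. rewrite !thM, (morphV thM), (decompE hSD (th (val h))) at 1.
    group_simpl. reflexivity.
Qed.

Lemma autK_mat_inMK : inMK (autK_mat th).
Proof.
  destruct thA as (thM & thB & thK & thKs).
  split; [|split; [|split; [|split; [|split; [|split]]]]].
  - intros a b. apply val_inj, (autK_decompM a b).
  - intros a b. apply val_inj. cbn [autK_mat md].
    rewrite (autK_kpart (smul a b)), !val_smul, !autK_kpart. apply thM.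
  - cbn [autK_mat md]. split.
    + intros a b E. apply val_inj, (proj1 thB).
      rewrite <- (autK_kpart a), <- (autK_kpart b), E. reflexivity.
    + intros [y Hy]. destruct (thKs y Hy) as [x [Hx E]].
      exists (exist _ x Hx). apply val_inj. rewrite autK_kpart. exact E.
  - intros h h'. apply (autK_decompM h h').
  - intros h k hk E. cbn [autK_mat mg md]. rewrite E, autK_kpart. apply (autK_decompJ h k).
  - intros h k hk E. cbn [autK_mat ma md]. rewrite E, autK_kpart. apply (autK_decompJ h k).
  - apply mat_aut_bijective.
    replace (mat_aut (autK_mat th)) with th; [exact thB |].
    apply functional_extensionality. intro x. symmetry. apply mat_aut_autK_mat.
Qed.

End AutKToMat.

Lemma autK_mat_comp {th th' : G -> G} : AutK K th -> AutK K th' ->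
  autK_mat (fun x => th (th' x)) = mmul (autK_mat th) (autK_mat th').
Proof.
  intros thA th'A.
  assert (E : forall h : elt H,
    hpart (th (th' (val h))) = ma (mmul (autK_mat th) (autK_mat th')) h /\
    kpart (th (th' (val h))) = mg (mmul (autK_mat th) (autK_mat th')) h).
  { intro h. rewrite (decompE hSD (th' (val h))), <- (mat_aut_autK_mat thA), mat_autE.
    apply (decomp_mul hSD). }
  apply mat_eq; [apply E | apply E |].
  intro k. cbn [autK_mat mmul md]. rewrite (autK_kpart th'A). reflexivity.
Qed.

Lemma autK_mat_inj {th th' : G -> G} : AutK K th -> AutK K th' ->
  autK_mat th = autK_mat th' -> forall x, th x = th' x.
Proof.
  intros thA th'A E x. rewrite <- (mat_aut_autK_mat thA), <- (mat_aut_autK_mat th'A), E.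
  reflexivity.
Qed.

Section MatToAutK.
Variable m : mat H K.
Hypothesis mM : inMK m.

Lemma mat_mg1 : mg m (elt1 H) = elt1 K.
Proof. exact (morph_elt1 (proj1 mM)). Qed.

Lemma mat_md1 : md m (elt1 K) = elt1 K.
Proof. exact (morph_elt1 (proj1 (proj2 mM))). Qed.

Lemma mat_ma1 : val (ma m (elt1 H)) = gone.
Proof.
  destruct mM as (_ & _ & _ & C1 & _).
  apply idemg_eq1. rewrite <- (smul11 H) at 3. rewrite C1, mat_mg1.
  unfold gconj. cbn. rewrite gmul1l, invg1, gmul1r. reflexivity.
Qed.

Lemma mat_aut_H (h : elt H) : mat_aut m (val h) = val (ma m h) ** val (mg m h).
Proof.
  rewrite <- (gmul1r (val h)). change gone with (val (elt1 K)).
  rewrite mat_autE, mat_md1, val_smul. apply f_equal, gmul1r.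
Qed.

Lemma mat_aut_K (k : elt K) : mat_aut m (val k) = val (md m k).
Proof.
  rewrite <- (gmul1l (val k)). change gone with (val (elt1 H)).
  rewrite mat_autE, mat_mg1, val_smul, mat_ma1, !gmul1l. reflexivity.
Qed.

(* (a b)(a' b') = (a c)(b b') with c = a'^b; (C1)-(C3) expand the image of the right side. *)
Lemma mat_aut_mul_decomp (a a' c : elt H) (b b' : elt K) :
  val c = gconj (val a') (val b) ->
  mat_aut m (val a ** val b ** (val a' ** val b')) =
  mat_aut m (val a ** val b) ** mat_aut m (val a' ** val b').
Proof.
  destruct mM as (gM & dM & _ & C1 & C2 & C3 & _). intro Ec.
  replace (val a ** val b ** (val a' ** val b')) with (val (smul a c) ** val (smul b b'))
    by (rewrite !val_smul, Ec; group_simpl; reflexivity).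
  rewrite !mat_autE, gM, dM, !val_smul, C1, (C3 a' b c Ec), (C2 a' b c Ec).
  group_simpl. reflexivity.
Qed.

Lemma mat_aut_morph x y : mat_aut m (x ** y) = mat_aut m x ** mat_aut m y.
Proof.
  rewrite (decompE hSD x), (decompE hSD y).
  apply mat_aut_mul_decomp with (c := exist _ _ (proj1 hSD _ (val (kpart x)) (proj2_sig (hpart y)))).
  reflexivity.
Qed.

Lemma mat_aut_AutK : AutK K (mat_aut m).
Proof.
  destruct mM as (_ & _ & [_ dS] & _ & _ & _ & C4).
  split; [exact mat_aut_morph | split; [apply mat_aut_bijective, C4 | split]].
  - intros x Hx. change x with (val (exist (smem K) x Hx)). rewrite mat_aut_K. apply proj2_sig.
  - intros y Hy. destruct (dS (exist _ y Hy)) as [k Ek]. exists (val k). split.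
    + apply proj2_sig.
    + rewrite mat_aut_K, Ek. reflexivity.
Qed.

Lemma autK_mat_mat_aut : autK_mat (mat_aut m) = m.
Proof.
  apply mat_eq; intro h; cbn [autK_mat ma mg md].
  - rewrite mat_aut_H. apply (decomp_mul hSD).
  - rewrite mat_aut_H. apply (decomp_mul hSD).
  - apply val_inj. rewrite mat_aut_K. apply (kpart_K hSD), proj2_sig.
Qed.

End MatToAutK.

Definition mat1 : mat H K := autK_mat (fun x => x).

Lemma inMK_autK_mat {m : mat H K} : inMK m -> exists th, AutK K th /\ autK_mat th = m.
Proof.
  intro mM. exists (mat_aut m). split; [apply mat_aut_AutK | apply autK_mat_mat_aut]; exact mM.
Qed.

Lemma inMK_mmul (m m' : mat H K) : inMK m -> inMK m' -> inMK (mmul m m').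
Proof.
  intros mM m'M.
  destruct (inMK_autK_mat mM) as [th [thA <-]], (inMK_autK_mat m'M) as [th' [th'A <-]].
  rewrite <- autK_mat_comp by assumption. apply autK_mat_inMK, AutK_comp; assumption.
Qed.

Lemma mmulA_inMK (m1 m2 m3 : mat H K) : inMK m1 -> inMK m2 -> inMK m3 ->
  mmul m1 (mmul m2 m3) = mmul (mmul m1 m2) m3.
Proof.
  intros m1M m2M m3M.
  destruct (inMK_autK_mat m1M) as [t1 [A1 <-]], (inMK_autK_mat m2M) as [t2 [A2 <-]],
    (inMK_autK_mat m3M) as [t3 [A3 <-]].
  rewrite <- (autK_mat_comp A2 A3), <- (autK_mat_comp A1 (AutK_comp A2 A3)),
    <- (autK_mat_comp A1 A2), <- (autK_mat_comp (AutK_comp A1 A2) A3).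
  reflexivity.
Qed.

Lemma mmul1_inMK (m : mat H K) : inMK m ->
  mmul mat1 m = m /\ mmul m mat1 = m.
Proof.
  intro mM. unfold mat1. destruct (inMK_autK_mat mM) as [th [thA <-]].
  rewrite <- (autK_mat_comp AutK_id thA), <- (autK_mat_comp thA AutK_id).
  split; reflexivity.
Qed.

Lemma mmulV_inMK (m : mat H K) : inMK m -> exists m', inMK m' /\
  mmul m m' = mat1 /\ mmul m' m = mat1.
Proof.
  intro mM. unfold mat1. destruct (inMK_autK_mat mM) as [th [thA <-]].
  destruct (AutK_inv thA) as [thi [thiA [R L]]].
  exists (autK_mat thi). split; [apply autK_mat_inMK, thiA|].
  rewrite <- (autK_mat_comp thA thiA), <- (autK_mat_comp thiA thA).
  split; f_equal; apply functional_extensionality; assumption.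
Qed.

End Matrices.

Theorem mainTheorem1 (G : Group) (H K : subgroup G) (hSD : semidirect H K) :
  (* \hat M_K is a group under mmul *)
  ((forall m m' : mat H K, inMK m -> inMK m' -> inMK (mmul m m')) /\
   (forall m1 m2 m3 : mat H K, inMK m1 -> inMK m2 -> inMK m3 ->
      mmul m1 (mmul m2 m3) = mmul (mmul m1 m2) m3) /\
   (exists e : mat H K, inMK e /\
      (forall m, inMK m -> mmul e m = m /\ mmul m e = m) /\
      (forall m, inMK m -> exists m', inMK m' /\ mmul m m' = e /\ mmul m' m = e))) /\
  (* Aut_K(G) is isomorphic to \hat M_K via theta |-> [alpha 0; gamma delta] *)
  (exists Phi : (G -> G) -> mat H K,
     (forall theta, AutK K theta ->
        inMK (Phi theta) /\
        (forall h : elt H,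
           theta (proj1_sig h) =
           gmul (proj1_sig (ma (Phi theta) h)) (proj1_sig (mg (Phi theta) h))) /\
        (forall k : elt K, proj1_sig (md (Phi theta) k) = theta (proj1_sig k))) /\
     (forall theta theta', AutK K theta -> AutK K theta' ->
        Phi (fun x => theta (theta' x)) = mmul (Phi theta) (Phi theta')) /\
     (forall theta theta', AutK K theta -> AutK K theta' ->
        Phi theta = Phi theta' -> forall x, theta x = theta' x) /\
     (forall m, inMK m -> exists theta, AutK K theta /\ Phi theta = m)).
Proof.
  split.
  - split; [exact (inMK_mmul hSD) | split; [exact (mmulA_inMK hSD) |]].
    exists (mat1 hSD).
    split; [apply autK_mat_inMK, AutK_id | split; [exact (mmul1_inMK hSD) | exact (mmulV_inMK hSD)]].
  - exists (autK_mat hSD). split; [|split; [|split]].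
    + intros th thA. split; [|split].
      * exact (autK_mat_inMK hSD thA).
      * intro h. apply (decompE hSD).
      * exact (autK_kpart hSD thA).
    + intros th th' thA th'A. exact (autK_mat_comp hSD thA th'A).
    + intros th th' thA th'A. exact (autK_mat_inj hSD thA th'A).
    + intros m mM. exact (inMK_autK_mat hSD mM).
Qed.
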